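(* Let $U$ be a $\times_A$-Hopf algebra such that $U_\lhd$ is a projective right $A$-module. Then for all projective left $U$-modules $P,Q$, the left $U$-module $P\otimes Q$ is projective.
   Context: $k$ commutative ring, $A$ a $k$-algebra, $A^e=A\otimes_kA^{\mathrm{op}}$; an $A^e$-algebra is a $k$-algebra $U$ with $\eta:A^e\to U$; left $U$-modules are $A$-bimodules via $a\rhd m\lhd b=\eta(a\otimes b)m$, right $U$-modules via $a\blacktriangleright n\blacktriangleleft b=n\eta(b\otimes a)$. $U\otimes_AU$ is the tensor product of $U_\lhd$ and ${}_\rhd U$; $U\times_AU$ is the subset of $\sum u_i\otimes v_i$ with $\sum a\blacktriangleright u_i\otimes v_i=\sum u_i\otimes v_i\blacktriangleleft a$ for all $a$. A $\times_A$-bialgebra is an $A^e$-algebra $U$ with $A^e$-algebra maps $\hat\Delta:U\to U\times_AU$, $\hat\varepsilon:U\to\mathrm{End}_k(A)$ making $U$, via $\Delta(u)=u_{(1)}\otimes u_{(2)}$ and $\varepsilon(u)=\hat\varepsilon(u)(1)$, a coalgebra in $A$-bimodules. For left $U$-modules $M,N$, $M\otimes N$ is $M\otimes_AN$ with $u(m\otimes n)=u_{(1)}m\otimes u_{(2)}n$. $U$ is a $\times_A$-Hopf algebra if the Galois map ${}_\blacktriangleright U\otimes_{A^{\mathrm{op}}}U_\lhd\to U_\lhd\otimes_A{}_\rhd U$, $u\otimes v\mapsto u_{(1)}\otimes u_{(2)}v$, is bijective (${}_\blacktriangleright U\otimes_{A^{\mathrm{op}}}U_\lhd$ being $U\otimes_kU$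 modulo $a\blacktriangleright u\otimes v-u\otimes v\lhd a$). *)

From HB Require Import structures.
From mathcomp Require Import all_boot all_order all_algebra.
Set Implicit Arguments. Unset Strict Implicit. Unset Printing Implicit Defensive.
Import GRing.Theory.
Local Open Scope ring_scope.

(* Tensor products over a (noncommutative) ring, presented by generators and *)
(* relations: an element of M (x)_A N is represented by a finite formal sum   *)
(* [:: (m1,n1); ... ; (mr,nr)] of pure tensors, and [tens_eq] is the          *)
(* congruence (w.r.t. concatenation = addition) generated by commutativity of *)
(* addition, biadditivity, m(x)0 = 0 = 0(x)n, the balancing relation          *)
(* (m<a)(x)n = m(x)(a>n), and the given equalities on the factors (so that    *)
(* factors may themselves be presented modules, e.g. (U(x)U)(x)U).            *)
(* The abelian group M (x)_A N is the quotient seq (M*N) / tens_eq.          *)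
Section Tensor.
Variables (A M N : Type) (eqM : M -> M -> Prop) (eqN : N -> N -> Prop).
Variables (addM : M -> M -> M) (addN : N -> N -> N) (zM : M) (zN : N).
Variables (ract : M -> A -> M) (lact : A -> N -> N).

Inductive tens_eq : seq (M * N) -> seq (M * N) -> Prop :=
| te_refl s : tens_eq s s
| te_sym s r : tens_eq s r -> tens_eq r s
| te_trans s r q : tens_eq s r -> tens_eq r q -> tens_eq s q
| te_cat s s' r r' : tens_eq s s' -> tens_eq r r' -> tens_eq (s ++ r) (s' ++ r')
| te_comm s r : tens_eq (s ++ r) (r ++ s)
| te_addl m m' n : tens_eq [:: (addM m m', n)] [:: (m, n); (m', n)]
| te_addr m n n' : tens_eq [:: (m, addN n n')] [:: (m, n); (m, n')]
| te_zerol n : tens_eq [:: (zM, n)] [::]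
| te_zeror m : tens_eq [:: (m, zN)] [::]
| te_bal m a n : tens_eq [:: (ract m a, n)] [:: (m, lact a n)]
| te_eqM m m' n : eqM m m' -> tens_eq [:: (m, n)] [:: (m', n)]
| te_eqN m n n' : eqN n n' -> tens_eq [:: (m, n)] [:: (m, n')].
End Tensor.

Record premod (R : pzRingType) := PreMod {
  pm_car : Type;
  pm_eq : pm_car -> pm_car -> Prop;
  pm_add : pm_car -> pm_car -> pm_car;
  pm_act : R -> pm_car -> pm_car }.

Definition premod_of (R : pzRingType) (M : lmodType R) : premod R :=
  @PreMod R M (@eq M) (@GRing.add M) (@GRing.scale R M).

Definition pm_hom (R : pzRingType) (X : premod R) (M : lmodType R)
  (g : pm_car X -> M) : Prop :=
  [/\ forall x y, pm_eq x y -> g x = g y,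
      forall x y, g (pm_add x y) = g x + g y
    & forall r x, g (pm_act r x) = r *: g x].

Definition projective (R : pzRingType) (X : premod R) : Prop :=
  forall (M N : lmodType R) (f : M -> N),
    (forall x y, f (x + y) = f x + f y) ->
    (forall r x, f (r *: x) = r *: f x) ->
    (forall n, exists m, f m = n) ->
    forall g : pm_car X -> N, pm_hom g ->
    exists h : pm_car X -> M, pm_hom h /\ forall x, f (h x) = g x.

(* A^e-algebras.  A k-algebra map eta : A (x)_k A^op -> U is the same as a   *)
(* pair (s, t) of a k-algebra map s : A -> U and a k-algebra map             *)
(* t : A^op -> U with commuting images, via eta(a (x) b) = s a * t b.         *)
Definition is_Ae_algebra (k : comPzRingType) (A U : algType k)
  (s t : A -> U) : Prop :=
  [/\ [/\ forall a b, s (a + b) = s a + s b,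
          forall (c : k) a, s (c *: a) = c *: s a,
          forall a b, s (a * b) = s a * s b & s 1 = 1],
      [/\ forall a b, t (a + b) = t a + t b,
          forall (c : k) a, t (c *: a) = c *: t a,
          forall a b, t (a * b) = t b * t a & t 1 = 1]
    & forall a b, s a * t b = t b * s a].

Section XA.
Variables (k : comPzRingType) (A U : algType k) (s t : A -> U).

(* U_< (x)_A >U : relation  (t a * u) (x) v = u (x) (s a * v)   *)
Definition teqUU : seq (U * U) -> seq (U * U) -> Prop :=
  @tens_eq A U U eq eq +%R +%R 0 0 (fun u a => t a * u) (fun a v => s a * v).

(* >U (x)_{A^op} U_< : relation  (u * t a) (x) v = u (x) (t a * v)   *)
Definition teqUopU : seq (U * U) -> seq (U * U) -> Prop :=
  @tens_eq A U U eq eq +%R +%R 0 0 (fun u a => u * t a) (fun a v => t a * v).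

(* (U_< (x)_A >U_<) (x)_A >U *)
Definition teqUUU : seq (seq (U * U) * U) -> seq (seq (U * U) * U) -> Prop :=
  @tens_eq A (seq (U * U)) U teqUU eq cat +%R [::] 0
    (fun x a => [seq (p.1, t a * p.2) | p <- x]) (fun a v => s a * v).

Definition mulUU (x y : seq (U * U)) : seq (U * U) :=
  [seq (p.1 * q.1, p.2 * q.2) | p <- x, q <- y].

Definition galois_map (D : U -> seq (U * U)) (x : seq (U * U)) : seq (U * U) :=
  flatten [seq [seq (q.1, q.2 * p.2) | q <- D p.1] | p <- x].

(* The ×_A-bialgebra axioms for (s,t) with comultiplication
   D : U -> U x_A U (given on representatives) and counit E : U -> End_k(A). *)
Definition is_XA_bialgebra (D : U -> seq (U * U)) (E : U -> A -> A) : Prop :=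
  let eps u := E u 1 in
  [/\ is_Ae_algebra s t,
      (* D u lies in the Takeuchi product U x_A U *)
      forall u a, teqUU [seq (p.1 * t a, p.2) | p <- D u]
                        [seq (p.1, p.2 * s a) | p <- D u],
      (* D is a morphism of A^e-algebras U -> U x_A U *)
      [/\ forall u v, teqUU (D (u + v)) (D u ++ D v),
          forall (c : k) u, teqUU (D (c *: u)) [seq (c *: p.1, p.2) | p <- D u],
          forall u v, teqUU (D (u * v)) (mulUU (D u) (D v))
        & forall a b, teqUU (D (s a * t b)) [:: (s a, t b)]],
      (* E is a morphism of A^e-algebras U -> End_k(A) *)
      [/\ forall u, (forall x y, E u (x + y) = E u x + E u y)
                    /\ (forall (c : k) x, E u (c *: x) = c *: E u x),
          forall u v x, E (u + v) x = E u x + E v x,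
          forall (c : k) u x, E (c *: u) x = c *: E u x,
          forall u v x, E (u * v) x = E u (E v x)
        & forall a b x, E (s a * t b) x = a * x * b]
    & (* (U, Delta, eps) is a coalgebra in A-bimodules *)
      [/\ forall a b u, teqUU (D (s a * t b * u))
                              [seq (s a * p.1, t b * p.2) | p <- D u],
          forall a b u, eps (s a * t b * u) = a * eps u * b,
          (* coassociativity, in (U x_A U) x_A U *)
          forall u, teqUUU [seq (D p.1, p.2) | p <- D u]
                           (flatten [seq [seq ([:: (p.1, q.1)], q.2) | q <- D p.2]
                                    | p <- D u]),
          (* counitality: eps(u_(1)) > u_(2) = u = u_(1) < eps(u_(2)) *)
          forall u, \sum_(p <- D u) s (eps p.1) * p.2 = u
        & forall u, \sum_(p <- D u) t (eps p.2) * p.1 = u]].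

(* ×_A-Hopf algebra: bijective Galois map >U (x)_{A^op} U_< -> U_< (x)_A >U *)
Definition is_XA_Hopf (D : U -> seq (U * U)) (E : U -> A -> A) : Prop :=
  [/\ is_XA_bialgebra D E,
      forall x y, teqUU (galois_map D x) (galois_map D y) -> teqUopU x y
    & forall z, exists x, teqUU (galois_map D x) z].

(* U_< as a right A-module (= left A^c-module): u < a = t a * u *)
Definition U_ract_premod : premod (A^c) :=
  @PreMod (A^c) U eq +%R (fun (a : A^c) u => t a * u).

(* The left U-module P (x) Q = P (x)_A Q with u(p (x) q) = u_(1)p (x) u_(2)q *)
Definition tens_premod (D : U -> seq (U * U)) (P Q : lmodType U) : premod U :=
  @PreMod U (seq (P * Q))
    (@tens_eq A P Q eq eq +%R +%R 0 0 (fun p a => t a *: p) (fun a q => s a *: q))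
    cat
    (fun u x => flatten [seq [seq (d.1 *: pq.1, d.2 *: pq.2) | d <- D u]
                        | pq <- x]).
End XA.

From HB Require Import structures.
From mathcomp Require Import all_boot all_order all_algebra.
From mathcomp Require Import finmap monalg.
From Stdlib Require Import ClassicalEpsilon.
Set Implicit Arguments. Unset Strict Implicit. Unset Printing Implicit Defensive.
Import GRing.Theory.
Local Open Scope ring_scope.

(* Proof.  (1) The module >U (x)_{A^op} U_<, with U acting on the left factor,
   is induced from the projective right A-module U_<, hence is projective
   ([ind_projective]).  (2) The Galois map u (x) v |-> u_(1) (x) u_(2) v is a
   well-defined U-linear bijection from it onto U_< (x)_A >U with the diagonal
   action, and projectivity is invariant under isomorphism ([projective_iso]);
   so U (x) U is projective ([UU_projective]).  (3) Projective modules have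
   dual bases, i.e. are retracts of free modules ([dual_basis]); choosing dual
   bases of P and Q exhibits P (x) Q as a retract of a direct sum of copies of
   U (x) U, which yields the lifting property for P (x) Q
   ([tens_projective_of_dual_bases]). *)

Section TensorRelations.
Context {A : Type} {M N : eqType} {eqM : M -> M -> Prop} {eqN : N -> N -> Prop}.
Context {addM : M -> M -> M} {addN : N -> N -> N} {zM : M} {zN : N}.
Context {ract : M -> A -> M} {lact : A -> N -> N}.
Local Notation te := (tens_eq eqM eqN addM addN zM zN ract lact).

Lemma tens_eq_least (R : seq (M * N) -> seq (M * N) -> Prop) :
  (forall s, R s s) -> (forall s r, R s r -> R r s) ->
  (forall s r q, R s r -> R r q -> R s q) ->
  (forall s s' r r', R s s' -> R r r' -> R (s ++ r) (s' ++ r')) ->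
  (forall s r, R (s ++ r) (r ++ s)) ->
  (forall m m' n, R [:: (addM m m', n)] [:: (m, n); (m', n)]) ->
  (forall m n n', R [:: (m, addN n n')] [:: (m, n); (m, n')]) ->
  (forall n, R [:: (zM, n)] [::]) -> (forall m, R [:: (m, zN)] [::]) ->
  (forall m a n, R [:: (ract m a, n)] [:: (m, lact a n)]) ->
  (forall m m' n, eqM m m' -> R [:: (m, n)] [:: (m', n)]) ->
  (forall m n n', eqN n n' -> R [:: (m, n)] [:: (m, n')]) ->
  forall s r, te s r -> R s r.
Proof.
move=> Rr Rs Rt Rcat Rcomm Raddl Raddr Rzl Rzr Rbal ReqM ReqN s r.
by elim=> *; eauto.
Qed.

Lemma te_cons x s r : te s r -> te (x :: s) (x :: r).
Proof. by move=> sr; apply: (te_cat (s := [:: x]) (s' := [:: x])) => //; apply: te_refl.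
Qed.

Lemma te_perm s r : perm_eq s r -> te s r.
Proof.
elim: s r => [|x s IH] r; first by rewrite perm_sym => /perm_nilP ->; apply: te_refl.
move=> sr; have xr : x \in r by rewrite -(perm_mem sr) mem_head.
have /IH s_rem : perm_eq s (rem x r).
  by rewrite -(perm_cons x); apply: perm_trans sr (perm_to_rem xr).
apply: te_trans (te_cons x s_rem) _; apply: te_sym.
elim: r xr {sr s_rem} => // y r IHr; rewrite inE; case: (eqVneq y x) => [-> _|nyx /= xr].
  by rewrite /= eqxx; apply: te_refl.
apply: te_trans (te_cons y (IHr xr)) _.
rewrite (negbTE nyx).
exact: (te_cat (te_comm _ _ _ _ _ _ _ _ [:: y] [:: x]) (te_refl _ _ _ _ _ _ _ _ (rem x r))).
Qed.

Lemma te_flatten (I : Type) (F G : I -> seq (M * N)) (l : seq I) :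
  (forall i, te (F i) (G i)) -> te (flatten (map F l)) (flatten (map G l)).
Proof. by move=> FG; elim: l => [|i l IH] /=; [apply: te_refl | apply: te_cat]. Qed.

Lemma te_map_split (I : Type) (a b c : I -> M * N) (l : seq I) :
  (forall i, te [:: c i] [:: a i; b i]) -> te (map c l) (map a l ++ map b l).
Proof.
move=> cab; elim: l => [|i l IH] /=; first exact: te_refl.
apply: te_trans (te_cat (s := [:: c i]) (cab i) IH) _; apply: te_perm.
by rewrite /= perm_cons -[b i :: _]cat1s perm_catCA.
Qed.

Lemma te_map_nil (I : Type) (c : I -> M * N) (l : seq I) :
  (forall i, te [:: c i] [::]) -> te (map c l) [::].
Proof.
move=> c0; elim: l => [|i l IH] /=; first exact: te_refl.
exact: (te_cat (s := [:: c i]) (r := map c l) (s' := [::]) (r' := [::])).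
Qed.

Lemma tens_sum_eq (V : nmodType) (F : M * N -> V) :
  (forall m m' n, F (addM m m', n) = F (m, n) + F (m', n)) ->
  (forall m n n', F (m, addN n n') = F (m, n) + F (m, n')) ->
  (forall n, F (zM, n) = 0) -> (forall m, F (m, zN) = 0) ->
  (forall m a n, F (ract m a, n) = F (m, lact a n)) ->
  (forall m m' n, eqM m m' -> F (m, n) = F (m', n)) ->
  (forall m n n', eqN n n' -> F (m, n) = F (m, n')) ->
  forall s r, te s r -> \sum_(p <- s) F p = \sum_(p <- r) F p.
Proof.
move=> Fl Fr F0l F0r Fbal FeqM FeqN.
apply: (tens_eq_least (R := fun s r => \sum_(p <- s) F p = \sum_(p <- r) F p)).
- by [].
- by move=> s r ->.
- by move=> s r q -> ->.
- by move=> s s' r r' /= e1 e2; rewrite !big_cat e1 e2.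
- by move=> s r; rewrite !big_cat; apply: addrC.
- by move=> m m' n; rewrite !big_cons !big_nil Fl addrA.
- by move=> m n n'; rewrite !big_cons !big_nil Fr addrA.
- by move=> n; rewrite big_seq1 big_nil F0l.
- by move=> m; rewrite big_seq1 big_nil F0r.
- by move=> m a n; rewrite !big_seq1 Fbal.
- by move=> m m' n e; rewrite !big_seq1 (FeqM _ _ _ e).
- by move=> m n n' e; rewrite !big_seq1 (FeqN _ _ _ e).
Qed.

Section TensorMaps.
Context {A' : Type} {M' N' : eqType}.
Context {eqM' : M' -> M' -> Prop} {eqN' : N' -> N' -> Prop}.
Context {addM' : M' -> M' -> M'} {addN' : N' -> N' -> N'} {zM' : M'} {zN' : N'}.
Context {ract' : M' -> A' -> M'} {lact' : A' -> N' -> N'}.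
Local Notation te' := (tens_eq eqM' eqN' addM' addN' zM' zN' ract' lact').

Lemma tens_flatten_map (F : M * N -> seq (M' * N')) :
  (forall m m' n, te' (F (addM m m', n)) (F (m, n) ++ F (m', n))) ->
  (forall m n n', te' (F (m, addN n n')) (F (m, n) ++ F (m, n'))) ->
  (forall n, te' (F (zM, n)) [::]) -> (forall m, te' (F (m, zN)) [::]) ->
  (forall m a n, te' (F (ract m a, n)) (F (m, lact a n))) ->
  (forall m m' n, eqM m m' -> te' (F (m, n)) (F (m', n))) ->
  (forall m n n', eqN n n' -> te' (F (m, n)) (F (m, n'))) ->
  forall s r, te s r -> te' (flatten (map F s)) (flatten (map F r)).
Proof.
move=> Fl Fr F0l F0r Fbal FeqM FeqN.
apply: (tens_eq_least (R := fun s r => te' (flatten (map F s)) (flatten (map F r)))).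
- by move=> s; apply: te_refl.
- by move=> s r; apply: te_sym.
- by move=> s r q; apply: te_trans.
- by move=> s s' r r' /= e1 e2; rewrite !map_cat !flatten_cat; apply: te_cat.
- by move=> s r /=; rewrite !map_cat !flatten_cat; apply: te_comm.
- by move=> m m' n /=; rewrite !cats0; apply: Fl.
- by move=> m n n' /=; rewrite !cats0; apply: Fr.
- by move=> n /=; rewrite cats0; apply: F0l.
- by move=> m /=; rewrite cats0; apply: F0r.
- by move=> m a n /=; rewrite !cats0; apply: Fbal.
- by move=> m m' n e /=; rewrite !cats0; apply: FeqM.
- by move=> m n n' e /=; rewrite !cats0; apply: FeqN.
Qed.

Lemma tens_map (F : M * N -> M' * N') :
  (forall m m' n, te' [:: F (addM m m', n)] [:: F (m, n); F (m', n)]) ->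
  (forall m n n', te' [:: F (m, addN n n')] [:: F (m, n); F (m, n')]) ->
  (forall n, te' [:: F (zM, n)] [::]) -> (forall m, te' [:: F (m, zN)] [::]) ->
  (forall m a n, te' [:: F (ract m a, n)] [:: F (m, lact a n)]) ->
  (forall m m' n, eqM m m' -> te' [:: F (m, n)] [:: F (m', n)]) ->
  (forall m n n', eqN n n' -> te' [:: F (m, n)] [:: F (m, n')]) ->
  forall s r, te s r -> te' (map F s) (map F r).
Proof.
move=> Fl Fr F0l F0r Fbal FeqM FeqN s r sr.
rewrite -[map F s]flatten_map1 -[map F r]flatten_map1.
by apply: (tens_flatten_map (F := fun p => [:: F p]) _ _ _ _ _ _ _ sr).
Qed.
End TensorMaps.

End TensorRelations.

Lemma additive_zero (V W : zmodType) (f : V -> W) :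
  (forall x y, f (x + y) = f x + f y) -> f 0 = 0.
Proof. by move=> fD; apply: (addrI (f 0)); rewrite -fD !addr0. Qed.

Lemma cat_additive_nil (T : Type) (V : zmodType) (g : seq T -> V) :
  (forall x y, g (x ++ y) = g x + g y) -> g [::] = 0.
Proof. by move=> gD; apply: (addrI (g [::])); rewrite -gD addr0. Qed.

Lemma cat_additive_sum (T : Type) (V : zmodType) (g : seq T -> V) :
  (forall x y, g (x ++ y) = g x + g y) -> forall x, g x = \sum_(p <- x) g [:: p].
Proof.
move=> gD; elim=> [|p x IH]; first by rewrite big_nil (cat_additive_nil gD).
by rewrite big_cons -IH -gD.
Qed.

(* Restriction of scalars along a ring antimorphism [t : A -> U]: a left
   U-module becomes a right A-module, i.e. a left module over the converse
   ring [A^c], via [m < a = t a *: m]. *)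
Record antimorphism (A U : pzRingType) := Antimorphism {
  am_fun :> A -> U;
  am_add : forall a b, am_fun (a + b) = am_fun a + am_fun b;
  am_mul : forall a b, am_fun (a * b) = am_fun b * am_fun a;
  am_one : am_fun 1 = 1 }.

Section Restriction.
Variables (A U : pzRingType) (t : antimorphism A U) (M : lmodType U).

(* The carrier of [M] viewed as an [A^c]-module; the dummy dependency on [t]
   lets the module structure below be found from the type. *)
Definition restrict : Type := let _ := t in M.
HB.instance Definition _ := GRing.Zmodule.on restrict.

Definition restrict_scale (a : A^c) (m : restrict) : restrict := t a *: (m : M).

Lemma restrict_scaleA a b m :
  restrict_scale a (restrict_scale b m) = restrict_scale (a * b) m.
Proof. by rewrite /restrict_scale scalerA am_mul. Qed.

Lemma restrict_scale1 : left_id 1 restrict_scale.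
Proof. by move=> m; rewrite /restrict_scale am_one scale1r. Qed.

Lemma restrict_scaleDr : right_distributive restrict_scale +%R.
Proof. by move=> a m m'; rewrite /restrict_scale scalerDr. Qed.

Lemma restrict_scaleDl m : {morph restrict_scale^~ m : a b / a + b}.
Proof. by move=> a b; rewrite /restrict_scale am_add scalerDl. Qed.

HB.instance Definition _ := GRing.Zmodule_isLmodule.Build (A^c) restrict
  restrict_scaleA restrict_scale1 restrict_scaleDr restrict_scaleDl.

Lemma restrictZ (a : A^c) (m : restrict) : a *: m = t a *: (m : M).
Proof. by []. Qed.

Lemma restrictD (m m' : restrict) : m + m' = (m : M) + m'.
Proof. by []. Qed.
End Restriction.

Definition pm_congruence (R : pzRingType) (X : premod R) : Prop :=
  [/\ forall x y : pm_car X, pm_eq x y -> pm_eq y x,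
      forall x y z : pm_car X, pm_eq x y -> pm_eq y z -> pm_eq x z,
      forall x x' y y' : pm_car X,
        pm_eq x x' -> pm_eq y y' -> pm_eq (pm_add x y) (pm_add x' y')
    & forall r (x x' : pm_car X), pm_eq x x' -> pm_eq (pm_act r x) (pm_act r x')].

Lemma projective_iso (R : pzRingType) (X Y : premod R) (phi : pm_car X -> pm_car Y) :
  pm_congruence Y ->
  (forall x x', pm_eq x x' -> pm_eq (phi x) (phi x')) ->
  (forall x x', pm_eq (phi (pm_add x x')) (pm_add (phi x) (phi x'))) ->
  (forall r x, pm_eq (phi (pm_act r x)) (pm_act r (phi x))) ->
  (forall x x', pm_eq (phi x) (phi x') -> pm_eq x x') ->
  (forall y, exists x, pm_eq (phi x) y) ->
  projective X -> projective Y.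
Proof.
move=> [Ysym Ytrans Yadd Yact] phi_eq phi_add phi_act phi_inj phi_onto hX.
move=> M N f fD fZ fS g [g_eq g_add g_act].
pose psi y := proj1_sig (constructive_indefinite_description _ (phi_onto y)).
have psiK y : pm_eq (phi (psi y)) y.
  exact: proj2_sig (constructive_indefinite_description _ (phi_onto y)).
have gphi_hom : pm_hom (g \o phi).
  split=> [x x' /phi_eq /g_eq //|x x'|r x] /=.
    by rewrite -g_add; apply: g_eq.
  by rewrite -g_act; apply: g_eq.
have [h [[h_eq h_add h_act] fh]] := hX M N f fD fZ fS _ gphi_hom.
have psi_eq y y' : pm_eq (phi y) y' -> h y = h (psi y').
  move=> yy'; apply/h_eq/phi_inj.
  exact: Ytrans yy' (Ysym _ _ (psiK y')).
exists (h \o psi); split; first split=> /=.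
- by move=> y y' yy'; apply: psi_eq; apply: Ytrans (psiK y) yy'.
- move=> y y'; rewrite -h_add; apply/esym/psi_eq.
  exact: Ytrans (phi_add _ _) (Yadd _ _ _ _ (psiK y) (psiK y')).
- move=> r y; rewrite -h_act; apply/esym/psi_eq.
  exact: Ytrans (phi_act _ _) (Yact _ _ _ (psiK y)).
- by move=> y /=; rewrite fh; apply: g_eq.
Qed.

(* The left U-module >U (x)_{A^op} U_<, with U acting on the left factor: the
   module induced along [t] from the right A-module U_<. *)
Definition ind_premod (k : comPzRingType) (A U : algType k) (t : A -> U) : premod U :=
  @PreMod U (seq (U * U)) (teqUopU t) cat (fun u x => [seq (u * p.1, p.2) | p <- x]).

(* Induction preserves projectivity: a lift of v |-> g (1 (x) v) along the
   restriction of [f] extends to the lift u (x) v |-> u * H v. *)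
Lemma ind_projective (k : comPzRingType) (A U : algType k) (t : antimorphism A U) :
  projective (U_ract_premod t) -> projective (ind_premod t).
Proof.
move=> hU M N f fD fZ fS g [g_eq g_add g_act].
pose gamma (v : U) : restrict t N := g [:: (1, v)].
have gamma_hom : pm_hom (X := U_ract_premod t) gamma.
  split=> [v w -> //|v w|a v]; rewrite /gamma.
    by rewrite restrictD -g_add; apply: g_eq; apply: te_addr.
  rewrite restrictZ -g_act /= mulr1; apply: g_eq; apply: te_sym.
  by rewrite -{1}[t a]mul1r; apply: te_bal.
have [H [[_ H_add H_act] fH]] :=
  hU (restrict t M) (restrict t N) f fD (fun a => fZ (t a)) fS gamma gamma_hom.
have H0 : (H 0 : M) = 0 := additive_zero H_add.
exists (fun x => \sum_(p <- x) p.1 *: (H p.2 : M)); split; first split.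
- apply: tens_sum_eq => [m m' n|m n n'|n|m|m a n|m m' n ->|m n n' ->] //=.
  + exact: scalerDl.
  + by rewrite H_add scalerDr.
  + exact: scale0r.
  + by rewrite H0 scaler0.
  + by rewrite H_act restrictZ scalerA.
- by move=> x y; rewrite big_cat.
- by move=> u x; rewrite big_map scaler_sumr; apply: eq_bigr => p _; rewrite scalerA.
- move=> x; rewrite (cat_additive_sum g_add) (big_morph f fD (additive_zero fD)).
  by apply: eq_bigr => -[u v] _ /=; rewrite fZ fH /gamma -g_act /= mulr1.
Qed.

Lemma perm_allpairs_swap (T1 T2 : Type) (R : eqType) (f : T1 -> T2 -> R) a b :
  perm_eq [seq f x y | x <- a, y <- b] [seq f x y | y <- b, x <- a].
Proof.
elim: a => [|x a IH] /=; first by elim: b.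
rewrite perm_sym (perm_allpairs_consr (fun y x => f x y) b (fun=> x) (fun=> a)).
by rewrite perm_cat2l perm_sym.
Qed.

Section DiagonalAction.
Variables (k : comPzRingType) (A U : algType k) (s t : A -> U).
Variables (D : U -> seq (U * U)) (P Q : lmodType U).
Local Notation PQ := (tens_premod s t D P Q).

Definition pair_act (x : seq (U * U)) (p : P) (q : Q) : seq (P * Q) :=
  [seq (pr.1 *: p, pr.2 *: q) | pr <- x].

Lemma pair_act_teq p q x y :
  teqUU s t x y -> pm_eq (pair_act x p q : pm_car PQ) (pair_act y p q).
Proof.
apply: tens_map => [m m' n|m n n'|n|m|m a n|m m' n ->|m n n' ->] /=.
- by rewrite scalerDl; apply: te_addl.
- by rewrite scalerDl; apply: te_addr.
- by rewrite scale0r; apply: te_zerol.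
- by rewrite scale0r; apply: te_zeror.
- by rewrite -!scalerA; apply: te_bal.
- exact: te_refl.
- exact: te_refl.
Qed.

(* Since the coproduct takes values in the Takeuchi product, the diagonal
   action is well defined on P (x)_A Q. *)
Hypothesis takeuchi : forall u a,
  teqUU s t [seq (p.1 * t a, p.2) | p <- D u] [seq (p.1, p.2 * s a) | p <- D u].

Lemma tens_act_teq u (x y : pm_car PQ) : pm_eq x y -> pm_eq (pm_act u x) (pm_act u y).
Proof.
apply: tens_flatten_map => [m m' n|m n n'|n|m|m a n|m m' n ->|m n n' ->].
- by apply: te_map_split => d; rewrite scalerDr; apply: te_addl.
- by apply: te_map_split => d; rewrite scalerDr; apply: te_addr.
- by apply: te_map_nil => d; rewrite scaler0; apply: te_zerol.
- by apply: te_map_nil => d; rewrite scaler0; apply: te_zeror.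
- have := pair_act_teq m n (takeuchi u a); rewrite /pair_act -!map_comp.
  by congr tens_eq; apply: eq_map => d /=; rewrite scalerA.
- exact: te_refl.
- exact: te_refl.
Qed.

Lemma tens_congruence : pm_congruence PQ.
Proof.
split=> [x y|x y z|x x' y y'|u x x']; [exact: te_sym|exact: te_trans|exact: te_cat|].
exact: tens_act_teq.
Qed.
End DiagonalAction.

Section Galois.
Variables (k : comPzRingType) (A U : algType k) (s : A -> U) (t : antimorphism A U).
Variable D : U -> seq (U * U).
Local Notation teq := (teqUU s t).
Local Notation UU := (tens_premod s t D U^o U^o).

Lemma regular_scale (a x : U) : a *: (x : U^o) = a * x.
Proof. by []. Qed.

Definition rmul (y : U * U) (x : seq (U * U)) : seq (U * U) :=
  [seq (p.1 * y.1, p.2 * y.2) | p <- x].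

Lemma rmul_teq y x x' : teq x x' -> teq (rmul y x) (rmul y x').
Proof.
apply: tens_map => [m m' n|m n n'|n|m|m a n|m m' n ->|m n n' ->] /=.
- by rewrite mulrDl; apply: te_addl.
- by rewrite mulrDl; apply: te_addr.
- by rewrite mul0r; apply: te_zerol.
- by rewrite mul0r; apply: te_zeror.
- by rewrite -!mulrA; apply: te_bal.
- exact: te_refl.
- exact: te_refl.
Qed.

Lemma rmulA y z x : rmul y (rmul z x) = rmul (z.1 * y.1, z.2 * y.2) x.
Proof. by rewrite /rmul -map_comp; apply: eq_map => p /=; rewrite !mulrA. Qed.

Lemma mulUU_teqr x y y' :
  (forall a, teq [seq (p.1 * t a, p.2) | p <- x] [seq (p.1, p.2 * s a) | p <- x]) ->
  teq y y' -> teq (mulUU x y) (mulUU x y').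
Proof.
move=> x_tak yy'.
have swap z : perm_eq (mulUU x z) (flatten [seq rmul q x | q <- z]).
  exact: perm_allpairs_swap.
apply: te_trans (te_perm (swap y)) (te_trans _ (te_sym (te_perm (swap y')))).
move: yy'.
apply: tens_flatten_map => [m m' n|m n n'|n|m|m a n|m m' n ->|m n n' ->].
- by apply: te_map_split => p; rewrite mulrDr; apply: te_addl.
- by apply: te_map_split => p; rewrite mulrDr; apply: te_addr.
- by apply: te_map_nil => p; rewrite mulr0; apply: te_zerol.
- by apply: te_map_nil => p; rewrite mulr0; apply: te_zeror.
- have := rmul_teq (m, n) (x_tak a); rewrite /rmul -!map_comp.
  by congr tens_eq; apply: eq_map => p /=; rewrite mulrA.
- exact: te_refl.
- exact: te_refl.
Qed.

Hypothesis s1 : s 1 = 1.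
Hypothesis takeuchi : forall u a,
  teq [seq (p.1 * t a, p.2) | p <- D u] [seq (p.1, p.2 * s a) | p <- D u].
Hypothesis D_add : forall u v, teq (D (u + v)) (D u ++ D v).
Hypothesis D_scale : forall (c : k) u, teq (D (c *: u)) [seq (c *: p.1, p.2) | p <- D u].
Hypothesis D_mul : forall u v, teq (D (u * v)) (mulUU (D u) (D v)).
Hypothesis D_st : forall a b, teq (D (s a * t b)) [:: (s a, t b)].

Lemma D0 : teq (D 0) [::].
Proof.
have := D_scale 0 0; rewrite scale0r => D0_eq.
apply: te_trans D0_eq _; apply: te_map_nil => p.
by rewrite scale0r; apply: te_zerol.
Qed.

Lemma D_mul_t u a : teq (D (u * t a)) (rmul (1, t a) (D u)).
Proof.
apply: te_trans (D_mul u (t a)) _.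
have Dt : teq (D (t a)) [:: (1, t a)] by have := D_st 1 a; rewrite s1 mul1r.
apply: te_trans (mulUU_teqr (takeuchi u) Dt) _.
by rewrite /mulUU allpairs1r; apply: te_refl.
Qed.

Lemma galois_mapE x : galois_map D x = flatten [seq rmul (1, p.2) (D p.1) | p <- x].
Proof.
by congr flatten; apply: eq_map => p; apply: eq_map => q /=; rewrite mulr1.
Qed.

Lemma galois_teq x y : teqUopU t x y -> teq (galois_map D x) (galois_map D y).
Proof.
rewrite !galois_mapE.
apply: tens_flatten_map => [m m' n|m n n'|n|m|m a n|m m' n ->|m n n' ->] /=.
- by rewrite -map_cat; apply: rmul_teq.
- by apply: te_map_split => p; rewrite mulrDr; apply: te_addr.
- exact: (rmul_teq _ D0).
- by apply: te_map_nil => p; rewrite mulr0; apply: te_zeror.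
- by apply: te_trans (rmul_teq _ (D_mul_t m a)) _; rewrite rmulA /= !mul1r; apply: te_refl.
- exact: te_refl.
- exact: te_refl.
Qed.

Lemma flatten_pm_act u L :
  pm_act (p := UU) u (flatten L) = flatten [seq pm_act (p := UU) u l | l <- L].
Proof. by elim: L => //= l L <-; rewrite /= map_cat flatten_cat. Qed.

Lemma galois_act u x :
  teq (galois_map D [seq (u * p.1, p.2) | p <- x]) (pm_act (p := UU) u (galois_map D x)).
Proof.
rewrite !galois_mapE flatten_pm_act -!map_comp; apply: te_flatten => -[v w] /=.
apply: te_trans (rmul_teq _ (D_mul u v)) _; apply: te_perm.
rewrite /rmul /mulUU map_allpairs; apply: perm_trans (perm_allpairs_swap _ _ _) _.
rewrite allpairs_mapl; erewrite eq_allpairs; first exact: perm_refl.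
by move=> p d /=; rewrite !regular_scale !mulrA.
Qed.

Hypothesis galois_inj :
  forall x y, teq (galois_map D x) (galois_map D y) -> teqUopU t x y.
Hypothesis galois_onto : forall z, exists x, teq (galois_map D x) z.

Lemma UU_projective : projective (U_ract_premod t) -> projective UU.
Proof.
move=> hU; apply: (@projective_iso _ (ind_premod t) UU (galois_map D)).
- exact: tens_congruence.
- exact: galois_teq.
- by move=> x y; rewrite /= /galois_map map_cat flatten_cat; apply: te_refl.
- exact: galois_act.
- exact: galois_inj.
- exact: galois_onto.
- exact: ind_projective.
Qed.
End Galois.

Lemma sum_msupp_wide (K : choiceType) (G : zmodType) (V : nmodType)
    (a : {malg G[K]}) (S : {fset K}) (F : K -> G -> V) :
  (forall x, F x 0 = 0) -> (msupp a `<=` S)%fset ->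
  \sum_(x <- msupp a) F x a@_x = \sum_(x <- S) F x a@_x.
Proof.
move=> F0 aS; apply: big_fset_incl => // x _ xa.
by rewrite mcoeff_outdom.
Qed.

Section DualBasis.
Variables (R : nzRingType) (P : lmodType R).

Definition free_comb (a : {malg R[P]}) : P := \sum_(x <- msupp a) a@_x *: x.

Lemma free_combD a b : free_comb (a + b) = free_comb a + free_comb b.
Proof.
have wide c : (msupp c `<=` msupp a `|` msupp b)%fset ->
    free_comb c = \sum_(x <- (msupp a `|` msupp b)%fset) c@_x *: x.
  move=> sub; apply: (sum_msupp_wide (F := fun x r => r *: x)) sub => x.
  exact: scale0r.
rewrite !wide ?msuppD_le ?fsubsetUl ?fsubsetUr // -big_split /=.
by apply: eq_bigr => x _; rewrite mcoeffD scalerDl.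
Qed.

Lemma free_combZ r a : free_comb (r *: a) = r *: free_comb a.
Proof.
rewrite /free_comb (sum_msupp_wide (F := fun x r => r *: x) _ (msuppZ_le r a));
  last by move=> x; apply: scale0r.
by rewrite scaler_sumr; apply: eq_bigr => x _; rewrite mcoeffZ scalerA.
Qed.

Lemma free_combU p : free_comb << p >> = p.
Proof.
rewrite /free_comb (sum_msupp_wide (F := fun x r => r *: x) _ msuppU_le);
  last by move=> x; apply: scale0r.
by rewrite big_seq_fset1 mcoeffUU scale1r.
Qed.

Lemma dual_basis : projective (premod_of P) ->
  exists c : P -> {malg R[P]},
    [/\ forall p q, c (p + q) = c p + c q, forall r p, c (r *: p) = r *: c p
      & forall p, free_comb (c p) = p].
Proof.
move=> hP; have onto p : exists a, free_comb a = p by exists << p >>; apply: free_combU.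
have id_hom : pm_hom (X := premod_of P) id by [].
have [c [[_ cD cZ] cK]] := hP _ _ free_comb free_combD free_combZ onto id id_hom.
by exists c.
Qed.
End DualBasis.

Section TensorOfProjectives.
Variables (k : comPzRingType) (A U : algType k) (s t : A -> U) (D : U -> seq (U * U)).
Variables (P Q : lmodType U).
Local Notation PQ := (tens_premod s t D P Q).
Local Notation UU := (tens_premod s t D U^o U^o).

Variables (c : P -> {malg U[P]}) (d : Q -> {malg U[Q]}).
Hypotheses (cD : forall p p', c (p + p') = c p + c p')
           (cZ : forall r p, c (r *: p) = r *: c p).
Hypotheses (dD : forall q q', d (q + q') = d q + d q')
           (dZ : forall r q, d (r *: q) = r *: d q).
Hypotheses (cK : forall p, free_comb (c p) = p) (dK : forall q, free_comb (d q) = q).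

Lemma pair_act_pm_act u x p q :
  pair_act (pm_act (p := UU) u x) p q = pm_act (p := PQ) u (pair_act x p q).
Proof.
rewrite /pair_act map_flatten; congr flatten; rewrite -!map_comp.
apply: eq_map => pr /=; rewrite -map_comp; apply: eq_map => e /=.
by rewrite !regular_scale !scalerA.
Qed.

Section Lift.
Variables (M N : lmodType U) (f : M -> N) (g : pm_car PQ -> N).
Hypotheses (fD : forall x y, f (x + y) = f x + f y) (g_hom : pm_hom g).

Lemma g_suml (I : Type) (r : seq I) (F : I -> P) q :
  g [:: (\sum_(i <- r) F i, q)] = \sum_(i <- r) g [:: (F i, q)].
Proof.
case: g_hom => g_eq g_add _.
apply: (big_morph (fun p => g [:: (p, q)])) => [p p'|].
  by rewrite -g_add; apply: g_eq; apply: te_addl.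
by rewrite (g_eq _ [::]) ?(cat_additive_nil g_add) //; apply: te_zerol.
Qed.

Lemma g_sumr (I : Type) (r : seq I) (F : I -> Q) p :
  g [:: (p, \sum_(i <- r) F i)] = \sum_(i <- r) g [:: (p, F i)].
Proof.
case: g_hom => g_eq g_add _.
apply: (big_morph (fun q => g [:: (p, q)])) => [q q'|].
  by rewrite -g_add; apply: g_eq; apply: te_addr.
by rewrite (g_eq _ [::]) ?(cat_additive_nil g_add) //; apply: te_zeror.
Qed.

Variable H : P -> Q -> seq (U * U) -> M.
Hypotheses (H_hom : forall p q, pm_hom (X := UU) (H p q))
           (H_lift : forall p q x, f (H p q x) = g (pair_act x p q)).

Lemma H_eq p q x y : teqUU s t x y -> H p q x = H p q y.
Proof. by case: (H_hom p q) => eqH _ _; apply: eqH. Qed.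

Lemma H_cat p q x y : H p q (x ++ y) = H p q x + H p q y.
Proof. by case: (H_hom p q) => _ addH _; apply: addH. Qed.

Lemma H_zerol p q v : H p q [:: (0, v)] = 0.
Proof.
by rewrite (@H_eq _ _ _ [::]) ?(cat_additive_nil (H_cat p q)) //; apply: te_zerol.
Qed.

Lemma H_zeror p q v : H p q [:: (v, 0)] = 0.
Proof.
by rewrite (@H_eq _ _ _ [::]) ?(cat_additive_nil (H_cat p q)) //; apply: te_zeror.
Qed.

Lemma H_act p q u x y :
  u *: H p q [:: (x, y)] = \sum_(e <- D u) H p q [:: (e.1 * x, e.2 * y)].
Proof.
case: (H_hom p q) => _ _ actH; rewrite -actH /= cats0.
by rewrite (cat_additive_sum (H_cat p q)) big_map.
Qed.

(* The lift on coordinates: for a in the free module on P and b in the free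
   module on Q, the image of the "pure tensor" a (x) b. *)
Definition lift_coord (a : {malg U[P]}) (b : {malg U[Q]}) : M :=
  \sum_(p <- msupp a) \sum_(q <- msupp b) H p q [:: (a@_p, b@_q)].

Lemma lift_coord_wide a b (S : {fset P}) (T : {fset Q}) :
  (msupp a `<=` S)%fset -> (msupp b `<=` T)%fset ->
  lift_coord a b = \sum_(p <- S) \sum_(q <- T) H p q [:: (a@_p, b@_q)].
Proof.
move=> aS bT; rewrite /lift_coord.
rewrite (sum_msupp_wide (F := fun p x => \sum_(q <- msupp b) H p q [:: (x, b@_q)]) _ aS).
  apply: eq_bigr => p _.
  rewrite (sum_msupp_wide (F := fun q y => H p q [:: (a@_p, y)]) _ bT) //.
  by move=> q; apply: H_zeror.
by move=> p; apply: big1 => q _; apply: H_zerol.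
Qed.

Lemma lift_coord0l b : lift_coord 0 b = 0.
Proof. by rewrite /lift_coord msupp0 big_seq_fset0. Qed.

Lemma lift_coord0r a : lift_coord a 0 = 0.
Proof. by rewrite /lift_coord msupp0; apply: big1 => p _; rewrite big_seq_fset0. Qed.

Lemma lift_coordDl a a' b : lift_coord (a + a') b = lift_coord a b + lift_coord a' b.
Proof.
pose S := (msupp a `|` msupp a')%fset; have bb := fsubset_refl (msupp b).
rewrite !(lift_coord_wide (S := S) _ bb) ?msuppD_le ?fsubsetUl ?fsubsetUr //.
rewrite -big_split; apply: eq_bigr => p _; rewrite -big_split; apply: eq_bigr => q _ /=.
by rewrite mcoeffD -H_cat; apply: H_eq; apply: te_addl.
Qed.

Lemma lift_coordDr a b b' : lift_coord a (b + b') = lift_coord a b + lift_coord a b'.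
Proof.
pose T := (msupp b `|` msupp b')%fset; have aa := fsubset_refl (msupp a).
rewrite !(lift_coord_wide (T := T) aa) ?msuppD_le ?fsubsetUl ?fsubsetUr //.
rewrite -big_split; apply: eq_bigr => p _; rewrite -big_split; apply: eq_bigr => q _ /=.
by rewrite mcoeffD -H_cat; apply: H_eq; apply: te_addr.
Qed.

Lemma lift_coord_bal a b (x : A) : lift_coord (t x *: a) b = lift_coord a (s x *: b).
Proof.
have [aa bb] := (fsubset_refl (msupp a), fsubset_refl (msupp b)).
rewrite (lift_coord_wide (msuppZ_le _ _) bb) (lift_coord_wide aa (msuppZ_le _ _)).
apply: eq_bigr => p _; apply: eq_bigr => q _; rewrite !mcoeffZ.
by apply: H_eq; apply: te_bal.
Qed.

Lemma lift_coord_act u a b :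
  \sum_(e <- D u) lift_coord (e.1 *: a) (e.2 *: b) = u *: lift_coord a b.
Proof.
under eq_bigr do rewrite (lift_coord_wide (msuppZ_le _ a) (msuppZ_le _ b)).
rewrite exchange_big scaler_sumr; apply: eq_bigr => p _.
rewrite exchange_big scaler_sumr; apply: eq_bigr => q _.
by rewrite H_act; apply: eq_bigr => e _; rewrite !mcoeffZ.
Qed.

Lemma lift_coord_lift a b : f (lift_coord a b) = g [:: (free_comb a, free_comb b)].
Proof.
have f0 := additive_zero fD.
rewrite (big_morph f fD f0) g_suml; apply: eq_bigr => p _.
rewrite (big_morph f fD f0) g_sumr; apply: eq_bigr => q _.
by rewrite H_lift.
Qed.

Lemma tens_lift : exists h : pm_car PQ -> M, pm_hom h /\ forall x, f (h x) = g x.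
Proof.
exists (fun x => \sum_(pq <- x) lift_coord (c pq.1) (d pq.2)); split; first split.
- apply: tens_sum_eq => [m m' n|m n n'|n|m|m a n|m m' n ->|m n n' ->] //=.
  + by rewrite cD lift_coordDl.
  + by rewrite dD lift_coordDr.
  + by rewrite (additive_zero cD) lift_coord0l.
  + by rewrite (additive_zero dD) lift_coord0r.
  + by rewrite cZ dZ lift_coord_bal.
- by move=> x y; rewrite big_cat.
- move=> u x; rewrite big_flatten big_map scaler_sumr; apply: eq_bigr => -[p q] _ /=.
  by rewrite big_map -lift_coord_act; apply: eq_bigr => e _; rewrite cZ dZ.
- case: g_hom => _ g_add _ x; rewrite (cat_additive_sum g_add).
  rewrite (big_morph f fD (additive_zero fD)); apply: eq_bigr => -[p q] _ /=.
  by rewrite lift_coord_lift cK dK.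
Qed.
End Lift.

(* Lift each map x |-> g (x (p (x) q)) along f, using that U (x) U is
   projective, and assemble the lifts with the coordinates c, d. *)
Lemma tens_projective_of_dual_bases : projective UU -> projective PQ.
Proof.
move=> hUU M N f fD fZ fS g g_hom.
have pair_hom p q : pm_hom (X := UU) (fun x => g (pair_act x p q)).
  case: g_hom => g_eq g_add g_act; split=> [x y xy|x y|u x] /=.
  - exact/g_eq/pair_act_teq.
  - by rewrite -g_add /pair_act map_cat.
  - by rewrite pair_act_pm_act g_act.
have lifts p q := hUU M N f fD fZ fS _ (pair_hom p q).
pose H p q := proj1_sig (constructive_indefinite_description _ (lifts p q)).
have HP p q : pm_hom (X := UU) (H p q) /\ forall x, f (H p q x) = g (pair_act x p q).
  exact: proj2_sig (constructive_indefinite_description _ (lifts p q)).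
exact: (tens_lift fD g_hom (fun p q => (HP p q).1) (fun p q => (HP p q).2)).
Qed.
End TensorOfProjectives.

Theorem theorem3p5 (k : comPzRingType) (A U : algType k) (s t : A -> U)
  (D : U -> seq (U * U)) (E : U -> A -> A) :
  is_XA_Hopf s t D E ->
  projective (U_ract_premod t) ->
  forall P Q : lmodType U,
    projective (premod_of P) -> projective (premod_of Q) ->
    projective (tens_premod s t D P Q).
Proof.
case=> [[[[_ _ _ s1] [tD _ tM t1] _] takeuchi [D_add D_scale D_mul D_st] _ _]].
move=> galois_inj galois_onto hU P Q hP hQ.
pose t' := Antimorphism tD tM t1.
have hUU := UU_projective (t := t') s1 takeuchi D_add D_scale D_mul D_st
  galois_inj galois_onto hU.
have [c [cD cZ cK]] := dual_basis hP.
have [d [dD dZ dK]] := dual_basis hQ.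
exact: tens_projective_of_dual_bases cD cZ dD dZ cK dK hUU.
Qed.
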